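(* Let $k\subset K$ be a finite totally ramified extension of complete discrete valuation fields of degree $n$. On $\mathbb Z^2$ define $(a,b)\le(a',b')$ iff $a\le a'$ and $b\le b'$, and $(a,b)\sim(a',b')$ iff $a-a'=b'-b=nc$ for some $c\in\mathbb Z$. Then: 1. $\le$ is a partial order and $\sim$ is an equivalence relation on $\mathbb Z^2$. 2. On $\mathcal X=\mathbb Z^2/\sim$ (with $[(a,b)]$ the class of $(a,b)$), setting $[(a,b)]\le^{\mathcal X}[(a',b')]$ iff $(a,b)\le(a'',b'')$ for some $(a'',b'')\sim(a',b')$ gives a well-defined partial order. 3. For all $a,b,a',b'\in\mathbb Z$: $\mathfrak m^a\otimes\mathfrak m^b\supseteq\mathfrak m^{a'}\otimes\mathfrak m^{b'}$ if and only if $[(a,b)]\le^{\mathcal X}[(a',b')]$.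
   Context: $\mathfrak m$ is the maximal ideal of the ring of integers $O_K$ of $K$, $O_k$ the ring of integers of $k$. For $O_k$-submodules $A,B\subset K$, $A\otimes B$ denotes the $O_k$-submodule of $K\otimes_kK$ generated by all $x\otimes y$ with $x\in A$, $y\in B$. *)

From HB Require Import structures.
From mathcomp Require Import all_boot all_order all_algebra all_field.
Set Implicit Arguments. Unset Strict Implicit. Unset Printing Implicit Defensive.
Import Order.TTheory GRing.Theory Num.Theory.
Local Open Scope ring_scope.

(* A normalized discrete valuation on a field K, given by its values on
   nonzero elements (the value at 0 is irrelevant; 0 is treated as having
   valuation +oo through [mem_pow]). *)
Definition is_normalized_discrete_valuation (K : fieldType) (v : K -> int) : Prop :=
  [/\ (forall x y : K, x != 0 -> y != 0 -> v (x * y) = v x + v y),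
      (forall x y : K, x != 0 -> y != 0 -> x + y != 0 ->
          Num.min (v x) (v y) <= v (x + y))
    & (forall z : int, exists x : K, x != 0 /\ v x = z)].

Definition mem_pow (K : fieldType) (v : K -> int) (a : int) (x : K) : bool :=
  (x == 0) || (a <= v x).

Definition vcauchy (K : fieldType) (v : K -> int) (u : nat -> K) : Prop :=
  forall N : int, exists M : nat, forall m p : nat, (M <= m)%N -> (M <= p)%N ->
    mem_pow v N (u m - u p).

Definition vconverges (K : fieldType) (v : K -> int) (u : nat -> K) (l : K) : Prop :=
  forall N : int, exists M : nat, forall m : nat, (M <= m)%N -> mem_pow v N (u m - l).

Definition vcomplete (K : fieldType) (v : K -> int) : Prop :=
  forall u : nat -> K, vcauchy v u -> exists l : K, vconverges v u l.

Definition vcomplete_base (k : fieldType) (K : fieldExtType k) (v : K -> int) : Prop :=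
  forall u : nat -> k, vcauchy v (fun m => (u m)%:A) ->
    exists l : k, vconverges v (fun m => (u m)%:A) l%:A.

(* K/k is totally ramified of degree n: [K:k] = n and the ramification
   index is n, i.e. v_K(k^x) = nZ. *)
Definition totally_ramified (k : fieldType) (K : fieldExtType k) (v : K -> int)
    (n : nat) : Prop :=
  [/\ \dim (fullv : {vspace K}) = n,
      (forall c : k, c != 0 -> exists z : int, v c%:A = n%:Z * z)
    & (exists c : k, c != 0 /\ v c%:A = n%:Z)].

Definition in_Ok (k : fieldType) (K : fieldExtType k) (v : K -> int) (c : k) : bool :=
  mem_pow v 0 c%:A.

(* Realised concretely as d x d matrices over k via a k-basis of K
   (d = [K:k]); x (x) y has coordinates coord_i(x) * coord_j(y). *)
Definition tens (k : fieldType) (K : fieldExtType k) (x y : K)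
    : 'M[k]_(\dim (fullv : {vspace K})) :=
  \matrix_(i, j) (coord (vbasis fullv) i x * coord (vbasis fullv) j y).

(* A (x) B : the O_k-submodule generated by x (x) y, x in A, y in B,
   i.e. finite O_k-linear combinations of such pure tensors. *)
Definition tens_span (k : fieldType) (K : fieldExtType k) (v : K -> int)
    (A B : K -> bool) (M : 'M[k]_(\dim (fullv : {vspace K}))) : Prop :=
  exists s : seq (k * K * K),
    [/\ all (fun t => in_Ok v t.1.1 && A t.1.2 && B t.2) s
      & M = \sum_(t <- s) t.1.1 *: tens t.1.2 t.2].

Definition tens_pow (k : fieldType) (K : fieldExtType k) (v : K -> int) (a b : int) :=
  tens_span v (mem_pow v a) (mem_pow v b).

Definition le2 (p q : int * int) : Prop := p.1 <= q.1 /\ p.2 <= q.2.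

Definition sim (n : nat) (p q : int * int) : Prop :=
  exists c : int, p.1 - q.1 = n%:Z * c /\ q.2 - p.2 = n%:Z * c.

Definition leX (n : nat) (p q : int * int) : Prop :=
  exists q'' : int * int, sim n q'' q /\ le2 p q''.

From HB Require Import structures.
From mathcomp Require Import all_boot all_order all_algebra all_field.
From mathcomp Require Import zify.
Set Implicit Arguments.
Unset Strict Implicit.
Unset Printing Implicit Defensive.

Import Order.TTheory GRing.Theory Num.Theory.
Local Open Scope ring_scope.

(* Moving a scalar w of k with v(w) = nc across the tensor sign gives
   m^a (x) m^b = m^(a+nc) (x) m^(b-nc), and m^a (x) m^b shrinks as (a, b) grows:
   this is the easy inclusion.  For the converse, the powers 1, pi, ..., pi^(n-1)
   of a uniformizer form a k-basis of K in which v (sum u_i pi^i) is the minimum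
   of the v (u_i) + i, because these valuations are distinct modulo n.  Hence for
   v r = -a the coordinate forms x |-> coord_i (r x) map m^a into O_k, and the
   products of two such forms map m^a (x) m^b into O_k.  Write a' - a = qn + r
   with 0 <= r < n; if (a, b) is not below the representative (a + r, b' + nq)
   of [(a', b')], some such product takes a value of negative valuation on x (x) y
   with v x = a + r and v y = b' + nq, an element of m^a' (x) m^b'. *)

Lemma le2_refl p : le2 p p.
Proof. by split. Qed.

Lemma le2_anti p q : le2 p q -> le2 q p -> p = q.
Proof. by case: p q => [p1 p2] [q1 q2] [/= ? ?] [/= ? ?]; congr pair; lia. Qed.

Lemma le2_trans p q r : le2 p q -> le2 q r -> le2 p r.
Proof. by case=> ? ? [? ?]; split; lia. Qed.

Lemma sim_refl n p : sim n p p.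
Proof. by exists 0; rewrite !subrr mulr0. Qed.

Lemma sim_sym n p q : sim n p q -> sim n q p.
Proof. by case=> c [? ?]; exists (- c); split; lia. Qed.

Lemma sim_trans n p q r : sim n p q -> sim n q r -> sim n p r.
Proof. by case=> c [? ?] [d [? ?]]; exists (c + d); split; lia. Qed.

Lemma leXP n p q :
  leX n p q <-> exists c : int, p.1 <= q.1 + n%:Z * c /\ p.2 <= q.2 - n%:Z * c.
Proof.
split=> [[q'' [[c [? ?]] [? ?]]] | [c [? ?]]]; first by exists c; split; lia.
by exists (q.1 + n%:Z * c, q.2 - n%:Z * c); split; [exists c | split]; rewrite /=; lia.
Qed.

Lemma leX_sim n p p' q q' : sim n p p' -> sim n q q' -> leX n p q -> leX n p' q'.
Proof.
move=> [c1 [? ?]] [c2 [? ?]] /leXP[c [? ?]].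
by apply/leXP; exists (c + c2 - c1); split; lia.
Qed.

Lemma leX_refl n p : leX n p p.
Proof. by apply/leXP; exists 0; split; lia. Qed.

Lemma leX_trans n p q r : leX n p q -> leX n q r -> leX n p r.
Proof.
by move=> /leXP[c [? ?]] /leXP[d [? ?]]; apply/leXP; exists (c + d); split; lia.
Qed.

Lemma leX_anti n p q : (0 < n)%N -> leX n p q -> leX n q p -> sim n p q.
Proof.
move=> n_gt0 /leXP[c [? ?]] /leXP[d [? ?]].
have cd0 : c + d = 0 by nia.
by exists (- d); split; nia.
Qed.

Lemma mulz_addn_inj (n i j : nat) (z1 z2 : int) : (i < n)%N -> (j < n)%N ->
  n%:Z * z1 + i%:Z = n%:Z * z2 + j%:Z -> i = j.
Proof. by move=> ? ? ?; case: (ltgtP z1 z2) => ?; nia. Qed.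

Lemma mulz_addn_ge0 (n i : nat) (w : int) : (i < n)%N ->
  0 <= n%:Z * w + i%:Z -> 0 <= n%:Z * w.
Proof. by move=> ? ?; case: (ltrP w 0) => ?; nia. Qed.

Lemma mulz_lt_le0 (n : nat) (w : int) : n%:Z * w < n%:Z -> n%:Z * w <= 0.
Proof. by move=> ?; case: (lerP w 0) => ?; nia. Qed.

Section Valuation.
Variables (K : fieldType) (v : K -> int).
Hypothesis vM : forall x y : K, x != 0 -> y != 0 -> v (x * y) = v x + v y.
Hypothesis vD : forall x y : K, x != 0 -> y != 0 -> x + y != 0 ->
  Num.min (v x) (v y) <= v (x + y).

Lemma valuation1 : v 1 = 0.
Proof. by apply/(addrI (v 1)); rewrite addr0 -vM ?oner_neq0 ?mulr1. Qed.

Lemma valuationN x : x != 0 -> v (- x) = v x.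
Proof.
move=> x0; have N1_0 : (-1 : K) != 0 by rewrite oppr_eq0 oner_neq0.
have vN1 : v (-1) = 0.
  have : v (-1) + v (-1) = 0 by rewrite -vM // mulrNN mulr1 valuation1.
  lia.
by rewrite -mulN1r vM // vN1 add0r.
Qed.

Lemma valuationV x : x != 0 -> v x^-1 = - v x.
Proof.
move=> x0; apply/(addrI (v x)); rewrite subrr -vM ?invr_neq0 //.
by rewrite mulfV // valuation1.
Qed.

Lemma valuationXz x (c : int) : x != 0 -> v (x ^ c) = c * v x.
Proof.
move=> x0; have vX m : v (x ^+ m) = m%:Z * v x.
  elim: m => [|m IHm]; first by rewrite expr0 valuation1 mul0r.
  by rewrite exprS vM ?expf_neq0 // IHm -{1}(mul1r (v x)) -mulrDl.
case: c => m; first exact: vX.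
by rewrite NegzE -invr_expz valuationV ?expf_neq0 // vX mulNr.
Qed.

Lemma valuationD_lt x y : x != 0 -> y != 0 -> v x < v y ->
  x + y != 0 /\ v (x + y) = v x.
Proof.
move=> x0 y0 vxy; have xy0 : x + y != 0.
  by apply: contraTneq vxy => /eqP; rewrite addr_eq0 => /eqP->; rewrite valuationN ?ltxx.
split=> //; apply/eqP; rewrite eq_le.
have Ny0 : - y != 0 by rewrite oppr_eq0.
have := vD xy0 Ny0; rewrite addrK valuationN // ge_min => /(_ x0).
case/orP=> [-> /= | /(lt_le_trans vxy)]; last by rewrite ltxx.
have := vD x0 y0 xy0; rewrite ge_min.
by case/orP=> [// | /(lt_le_trans vxy)/ltW].
Qed.

Lemma mem_pow_le a b x : a <= b -> mem_pow v b x -> mem_pow v a x.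
Proof. by rewrite /mem_pow => ab /orP[-> // | bx]; rewrite (le_trans ab bx) orbT. Qed.

Lemma mem_pow_valuation x : mem_pow v (v x) x.
Proof. by rewrite /mem_pow lexx orbT. Qed.

Lemma mem_powD a x y : mem_pow v a x -> mem_pow v a y -> mem_pow v a (x + y).
Proof.
rewrite /mem_pow; case: (eqVneq x 0) => [-> | x0 /= ax]; first by rewrite add0r.
case: (eqVneq y 0) => [-> | y0 /= ay]; first by rewrite addr0 (negbTE x0) ax.
case: (eqVneq (x + y) 0) => //= xy0; have := vD x0 y0 xy0.
by rewrite ge_min => /orP[] h; [apply: le_trans ax h | apply: le_trans ay h].
Qed.

Lemma mem_powM a b x y : mem_pow v a x -> mem_pow v b y -> mem_pow v (a + b) (x * y).
Proof.
rewrite /mem_pow mulf_eq0; case: (eqVneq x 0) => //= x0 xa.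
by case: (eqVneq y 0) => //= y0 yb; rewrite vM // lerD.
Qed.

Lemma valuation_sum_distinct (s : seq K) :
  s != [::] -> all (fun x => x != 0) s -> uniq (map v s) ->
  [/\ \sum_(x <- s) x != 0, v (\sum_(x <- s) x) \in map v s
    & forall y, y \in s -> v (\sum_(x <- s) x) <= v y].
Proof.
elim: s => [// | x s IHs] _ /= /andP[x0 s0] /andP[vx_s uniq_s]; rewrite big_cons.
have [-> | s_ne] := eqVneq s [::].
  by rewrite big_nil addr0 mem_seq1 eqxx; split=> // y; rewrite mem_seq1 => /eqP->.
have [S0 vS_s vS_le] := IHs s_ne s0 uniq_s.
set S := \sum_(y <- s) y in S0 vS_s vS_le *.
have vxS : v x != v S by apply: contraNneq vx_s => ->.
case: (ltgtP (v x) (v S)) vxS => // [vx_lt | vS_lt] _.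
- have [xS0 ->] := valuationD_lt x0 S0 vx_lt.
  split=> //; first by rewrite inE eqxx.
  by move=> y; rewrite inE => /predU1P[-> // | /vS_le/(lt_le_trans vx_lt)/ltW].
- have [Sx0 vSx] := valuationD_lt S0 x0 vS_lt; rewrite addrC in Sx0 vSx.
  split=> //; first by rewrite vSx inE vS_s orbT.
  by move=> y; rewrite vSx inE => /predU1P[-> | /vS_le //]; exact: ltW.
Qed.
End Valuation.

Section TensorForm.
Variables (k : fieldType) (K : fieldExtType k).
Local Notation e := (vbasis (fullv : {vspace K})).

Lemma tensZl (c : k) (x y : K) : tens (c *: x) y = tens x (c *: y).
Proof. by apply/matrixP => i j; rewrite !mxE !linearZ /= -mulrA mulrCA. Qed.

Definition tens_form (f g : {scalar K}) (M : 'M[k]_(\dim (fullv : {vspace K}))) : k :=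
  \sum_i \sum_j M i j * (f e`_i * g e`_j).

Lemma tens_form_is_scalar f g : scalar (tens_form f g).
Proof.
move=> c A B; rewrite /tens_form mulr_sumr -big_split; apply: eq_bigr => i _.
by rewrite mulr_sumr -big_split; apply: eq_bigr => j _; rewrite !mxE mulrDl mulrA.
Qed.

HB.instance Definition _ f g := GRing.isSemilinear.Build k _ k _ (tens_form f g)
  (GRing.semilinear_linear (tens_form_is_scalar f g)).

Lemma tens_formE f g (x y : K) : tens_form f g (tens x y) = f x * g y.
Proof.
have expand (h : {scalar K}) z : h z = \sum_i coord e i z * h e`_i.
  rewrite {1}(coord_vbasis (memvf z)) linear_sum.
  by apply: eq_bigr => i _; rewrite linearZ.
rewrite /tens_form (expand f x) (expand g y) mulr_suml; apply: eq_bigr => i _.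
by rewrite mulr_sumr; apply: eq_bigr => j _; rewrite mxE mulrACA.
Qed.

End TensorForm.

Section Extension.
Variables (k : fieldType) (K : fieldExtType k) (v : K -> int) (n : nat).
Hypothesis vM : forall x y : K, x != 0 -> y != 0 -> v (x * y) = v x + v y.
Hypothesis vD : forall x y : K, x != 0 -> y != 0 -> x + y != 0 ->
  Num.min (v x) (v y) <= v (x + y).
Hypothesis dimK : \dim (fullv : {vspace K}) = n.
Hypothesis vk_dvd : forall c : k, c != 0 -> exists z : int, v c%:A = n%:Z * z.
Hypothesis v_surj : forall z : int, exists x : K, x != 0 /\ v x = z.
Hypothesis vk_n : exists c : k, c != 0 /\ v c%:A = n%:Z.

Lemma alg_eq0 (c : k) : (c%:A == 0 :> K) = (c == 0).
Proof. by rewrite scaler_eq0 oner_eq0 orbF. Qed.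

Lemma in_Ok0 : in_Ok v 0.
Proof. by rewrite /in_Ok /mem_pow scale0r eqxx. Qed.

Lemma in_OkD c d : in_Ok v c -> in_Ok v d -> in_Ok v (c + d).
Proof. by move=> Oc Od; have := mem_powD vD Oc Od; rewrite -scalerDl. Qed.

Lemma in_OkM c d : in_Ok v c -> in_Ok v d -> in_Ok v (c * d).
Proof.
by move=> Oc Od; have := mem_powM vM Oc Od; rewrite addr0 mulr_algl scalerA.
Qed.

Lemma valuation_algM (c d : k) : c != 0 -> d != 0 ->
  v (c * d)%:A = v c%:A + v d%:A.
Proof. by move=> c0 d0; rewrite -scalerA -mulr_algl vM ?alg_eq0. Qed.

Lemma exists_alg_valuation (c : int) : exists2 w : k, w != 0 & v w%:A = n%:Z * c.
Proof.
case: vk_n => p [p0 vp]; exists (p ^ c); first by rewrite expfz_neq0.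
have := fmorphXz (in_alg K) c p; rewrite /= => ->.
by rewrite (valuationXz vM) ?alg_eq0 // vp mulrC.
Qed.

Section PiAdicBasis.
Variable pi : K.
Hypotheses (pi0 : pi != 0) (vpi : v pi = 1).

Lemma valuation_pi_term (u : k) (i : nat) : u != 0 ->
  u *: pi ^+ i != 0 /\ v (u *: pi ^+ i) = v u%:A + i%:Z.
Proof.
move=> u0; rewrite -[u *: _]mulr_algl.
split; first by rewrite mulf_neq0 ?alg_eq0 ?expf_neq0.
rewrite vM ?alg_eq0 ?expf_neq0 //; congr (_ + _).
by rewrite -[pi ^+ i]/(pi ^ i%:Z) (valuationXz vM) // vpi mulr1.
Qed.

Lemma valuation_pi_sum (u : 'I_n -> k) : (exists i, u i != 0) ->
  [/\ \sum_i u i *: pi ^+ i != 0,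
      exists2 i, u i != 0 & v (\sum_i u i *: pi ^+ i) = v (u i)%:A + i%:Z
    & forall i, u i != 0 -> v (\sum_i u i *: pi ^+ i) <= v (u i)%:A + i%:Z].
Proof.
move=> [i0 ui0]; pose term i := u i *: pi ^+ i.
pose s := map term [seq i <- index_enum 'I_n | u i != 0].
have mem_s i : u i != 0 -> term i \in s.
  by move=> ui; rewrite map_f // mem_filter ui mem_index_enum.
have sumE : \sum_i u i *: pi ^+ i = \sum_(x <- s) x.
  rewrite big_map big_filter [RHS]big_mkcond; apply: eq_bigr => i _.
  by case: eqVneq => [-> | //]; rewrite scale0r.
have s_ne : s != [::] by apply: contraTneq (mem_s i0 ui0) => ->.
have s_nz : all (fun x => x != 0) s.
  apply/allP => x /mapP[i]; rewrite mem_filter => /andP[ui _] ->.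
  by case: (valuation_pi_term i ui).
have s_uniq : uniq (map v s).
  rewrite -map_comp map_inj_in_uniq ?filter_uniq ?index_enum_uniq // => i j.
  rewrite !mem_filter => /andP[ui _] /andP[uj _] /=.
  rewrite (valuation_pi_term i ui).2 (valuation_pi_term j uj).2.
  have [zi ->] := vk_dvd ui; have [zj ->] := vk_dvd uj.
  by move/(mulz_addn_inj (ltn_ord i) (ltn_ord j)) => eq_ij; apply: val_inj.
have [S0 vS_s vS_le] := valuation_sum_distinct vM vD s_ne s_nz s_uniq.
rewrite sumE; split=> //.
  have /mapP[x /mapP[i]] := vS_s; rewrite mem_filter => /andP[ui _] -> ->.
  by exists i => //; rewrite (valuation_pi_term i ui).2.
by move=> i ui; rewrite -(valuation_pi_term i ui).2; apply/vS_le/mem_s.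
Qed.

Definition pi_powers : n.-tuple K := [tuple pi ^+ i | i < n].

Lemma pi_powersE (i : 'I_n) : pi_powers`_i = pi ^+ i.
Proof. exact: nth_mktuple. Qed.

Lemma pi_powers_basis : basis_of fullv pi_powers.
Proof.
rewrite basisEfree subvf dimK size_tuple leqnn !andbT.
apply/freeP => u; under eq_bigr do rewrite pi_powersE.
move=> sum0 i; case: (eqVneq (u i) 0) => // ui.
by have [] := valuation_pi_sum (ex_intro _ i ui); rewrite sum0 eqxx.
Qed.

Lemma coord_pi_valuation z : z != 0 ->
  (exists2 i, coord pi_powers i z != 0 & v z = v (coord pi_powers i z)%:A + i%:Z) /\
  (forall i, coord pi_powers i z != 0 -> v z <= v (coord pi_powers i z)%:A + i%:Z).
Proof.
have zE : z = \sum_i coord pi_powers i z *: pi ^+ i.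
  rewrite {1}(coord_basis pi_powers_basis (memvf z)).
  by apply: eq_bigr => i _; rewrite pi_powersE.
move=> z0; have /existsP[i0 ci0] : [exists i, coord pi_powers i z != 0].
  apply: contraNT z0; rewrite negb_exists => /forallP all0.
  by rewrite zE big1 // => i _; move/negPn/eqP: (all0 i) ->; rewrite scale0r.
have := valuation_pi_sum (u := fun i => coord pi_powers i z) (ex_intro _ i0 ci0).
by rewrite /= -zE => -[].
Qed.

Lemma exists_coord_pi_lt z (t : int) : z != 0 -> v z < t ->
  exists2 i, coord pi_powers i z != 0 & v (coord pi_powers i z)%:A < t.
Proof.
move=> z0 vz_lt; have [[i ci0 vzE] _] := coord_pi_valuation z0.
by exists i => //; apply: le_lt_trans vz_lt; rewrite vzE lerDl.
Qed.

Lemma coord_pi_integral z i : mem_pow v 0 z -> in_Ok v (coord pi_powers i z).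
Proof.
case: (eqVneq z 0) => [-> _ | z0 Oz]; first by rewrite linear0 in_Ok0.
case: (eqVneq (coord pi_powers i z) 0) => [-> | ci0]; first exact: in_Ok0.
have [_ /(_ i ci0) vz_le] := coord_pi_valuation z0.
move: Oz; rewrite /in_Ok /mem_pow (negbTE z0) alg_eq0 (negbTE ci0) /=.
have [w vw] := vk_dvd ci0; rewrite vw in vz_le *.
by move=> vz_ge0; apply: mulz_addn_ge0 (ltn_ord i) (le_trans vz_ge0 vz_le).
Qed.

Lemma coord_pi_mul_integral (r : K) a i z :
  v r = - a -> mem_pow v a z -> in_Ok v (coord pi_powers i (r * z)).
Proof.
move=> vr Az; apply: coord_pi_integral.
by have := mem_powM vM (mem_pow_valuation v r) Az; rewrite vr addNr.
Qed.

End PiAdicBasis.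

Lemma in_Ok1 : in_Ok v 1.
Proof. by rewrite /in_Ok scale1r /mem_pow (valuation1 vM) lexx orbT. Qed.

Lemma tens_form_integral (A B : K -> bool) (f g : {scalar K}) M :
    (forall x, A x -> in_Ok v (f x)) -> (forall y, B y -> in_Ok v (g y)) ->
  tens_span v A B M -> in_Ok v (tens_form f g M).
Proof.
move=> Af Bg [s [s_ok ->]]; rewrite linear_sum big_seq.
apply: (big_ind (in_Ok v)) => [|c d|t t_s]; [exact: in_Ok0 | exact: in_OkD |].
have /andP[/andP[Ot At] Bt] := allP s_ok t t_s.
rewrite linearZ; apply: in_OkM => //.
rewrite -[_ (tens _ _)]/(tens_form f g (tens t.1.2 t.2)) tens_formE.
by apply: in_OkM; [exact: Af | exact: Bg].
Qed.

Lemma tens_span_tens (A B : K -> bool) x y : A x -> B y -> tens_span v A B (tens x y).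
Proof.
move=> Ax By; exists [:: (1, x, y)]; split; last by rewrite big_seq1 scale1r.
by rewrite /= in_Ok1 Ax By.
Qed.

Lemma tens_pow_le2 a b a' b' M :
  le2 (a, b) (a', b') -> tens_pow v a' b' M -> tens_pow v a b M.
Proof.
case=> /= aa' bb' [s [s_ok ->]]; exists s; split=> //.
apply/allP => t /(allP s_ok) /andP[/andP[Ot At] Bt].
by rewrite Ot (mem_pow_le aa' At) (mem_pow_le bb' Bt).
Qed.

Lemma tens_pow_sim p q M : sim n p q -> tens_pow v q.1 q.2 M -> tens_pow v p.1 p.2 M.
Proof.
case=> c [pq1 pq2]; have [w w0 vw] := exists_alg_valuation c.
have wA0 : w%:A != 0 :> K by rewrite alg_eq0.
have vwV : v (w^-1)%:A = - (n%:Z * c).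
  by have := fmorphV (in_alg K) w; rewrite /= => ->; rewrite (valuationV vM) // vw.
case=> s [s_ok ->]; exists [seq (t.1.1, t.1.2 * w%:A, t.2 * (w^-1)%:A) | t <- s]; split.
  rewrite all_map; apply/allP => t /(allP s_ok) /andP[/andP[Ot At] Bt] /=; rewrite Ot /=.
  have -> : p.1 = q.1 + v w%:A by rewrite vw; lia.
  have -> : p.2 = q.2 + v (w^-1)%:A by rewrite vwV; lia.
  by rewrite !(mem_powM vM) ?mem_pow_valuation.
rewrite big_map; apply: eq_bigr => t _ /=.
by rewrite !mulr_algr tensZl scalerA mulfV // scale1r.
Qed.

Lemma tens_pow_not_subset a b a'' b'' : a'' < a + n%:Z -> b'' < b ->
  ~ (forall M, tens_pow v a'' b'' M -> tens_pow v a b M).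
Proof.
move=> lt_a lt_b sub.
have [pi [pi0 vpi]] := v_surj 1.
have [x [x0 vx]] := v_surj a''; have [y [y0 vy]] := v_surj b''.
have [ra [ra0 vra]] := v_surj (- a); have [rb [rb0 vrb]] := v_surj (- b).
have Txy : tens_pow v a b (tens x y).
  apply: sub; rewrite /tens_pow -vx -vy.
  by apply: tens_span_tens; apply: mem_pow_valuation.
have [i ci0 vci] : exists2 i, coord (pi_powers pi) i (ra * x) != 0 &
    v (coord (pi_powers pi) i (ra * x))%:A < n%:Z.
  by apply: exists_coord_pi_lt; rewrite ?mulf_neq0 // vM // vra vx; lia.
have [j cj0 vcj] : exists2 j, coord (pi_powers pi) j (rb * y) != 0 &
    v (coord (pi_powers pi) j (rb * y))%:A < 0.
  by apply: exists_coord_pi_lt; rewrite ?mulf_neq0 // vM // vrb vy; lia.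
have Oci z : mem_pow v a z -> in_Ok v (coord (pi_powers pi) i (ra * z)).
  exact: coord_pi_mul_integral.
have Ocj z : mem_pow v b z -> in_Ok v (coord (pi_powers pi) j (rb * z)).
  exact: coord_pi_mul_integral.
have := tens_form_integral (f := coord (pi_powers pi) i \o (ra \*o idfun))
  (g := coord (pi_powers pi) j \o (rb \*o idfun)) Oci Ocj Txy.
set ci := coord (pi_powers pi) i (ra * x); set cj := coord (pi_powers pi) j (rb * y).
rewrite tens_formE; change (~ in_Ok v (ci * cj)); apply/negP.
rewrite /in_Ok /mem_pow alg_eq0 (negbTE (mulf_neq0 ci0 cj0)) orFb -ltNge.
rewrite valuation_algM // -[0]addr0 ler_ltD //.
by have [w vw] := vk_dvd ci0; rewrite vw in vci *; apply: mulz_lt_le0.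
Qed.

Lemma degree_gt0 : (0 < n)%N.
Proof. by rewrite -dimK adim_gt0. Qed.

Lemma leX_of_tens_pow_subset a b a' b' :
  (forall M, tens_pow v a' b' M -> tens_pow v a b M) -> leX n (a, b) (a', b').
Proof.
move=> sub; set q := ((a' - a) %/ n)%Z; set r := ((a' - a) %% n)%Z.
have a'E : a' - a = q * n + r := divz_eq _ _.
have r_ge0 : 0 <= r by apply: modz_ge0; rewrite eqz_nat -lt0n degree_gt0.
have r_lt : r < n by apply: ltz_pmod; rewrite ltz_nat degree_gt0.
have sim_r : sim n (a', b') (a + r, b' + n%:Z * q) by exists q; split=> /=; lia.
exists (a + r, b' + n%:Z * q); split; first exact: sim_sym.
split=> /=; first lia.
rewrite leNgt; apply/negP => lt_b.
have lt_a : a + r < a + n%:Z by lia.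
apply: (tens_pow_not_subset lt_a lt_b).
by move=> M /(tens_pow_sim sim_r)/sub.
Qed.

Lemma tens_pow_subsetP a b a' b' :
  (forall M, tens_pow v a' b' M -> tens_pow v a b M) <-> leX n (a, b) (a', b').
Proof.
split; first exact: leX_of_tens_pow_subset.
by case=> -[p1 p2] [sim_p le_p] M /(tens_pow_sim sim_p); apply: tens_pow_le2.
Qed.

End Extension.

Theorem lemma4p2p3 (k : fieldType) (K : fieldExtType k) (v : K -> int) (n : nat) :
  is_normalized_discrete_valuation v ->
  vcomplete v -> vcomplete_base v ->
  totally_ramified v n ->
  (* 1. <= is a partial order, ~ an equivalence relation on Z^2 *)
  ((forall p, le2 p p) /\
   (forall p q, le2 p q -> le2 q p -> p = q) /\
   (forall p q r, le2 p q -> le2 q r -> le2 p r)) /\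
  ((forall p, sim n p p) /\
   (forall p q, sim n p q -> sim n q p) /\
   (forall p q r, sim n p q -> sim n q r -> sim n p r)) /\
  (* 2. <=^X is well defined on classes and is a partial order on Z^2/~ *)
  ((forall p p' q q', sim n p p' -> sim n q q' -> (leX n p q <-> leX n p' q')) /\
   (forall p, leX n p p) /\
   (forall p q, leX n p q -> leX n q p -> sim n p q) /\
   (forall p q r, leX n p q -> leX n q r -> leX n p r)) /\
  (* 3. m^a (x) m^b contains m^a' (x) m^b' iff [(a,b)] <=^X [(a',b')] *)
  (forall a b a' b' : int,
     (forall M, tens_pow v a' b' M -> tens_pow v a b M) <-> leX n (a, b) (a', b')).
Proof.
move=> [vM vD v_surj] _ _ [dimK vk_dvd vk_n].
split; first by split; [exact: le2_refl | split; [exact: le2_anti | exact: le2_trans]].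
split; first by split; [exact: sim_refl | split; [exact: sim_sym | exact: sim_trans]].
split; last by move=> a b a' b'; apply: tens_pow_subsetP.
split; first by move=> p p' q q' pp' qq'; split; apply: leX_sim => //; apply: sim_sym.
split; first exact: leX_refl.
by split; [move=> p q; exact: leX_anti (degree_gt0 dimK) | exact: leX_trans].
Qed.
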